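(* Let $a\in\mathbb{R}$ and let $\mathcal W_a=\bigoplus_{n\in\mathbb Z}\mathcal H\otimes L_n$ be the fractional Witt algebra described in the context. Then $\mathcal W_a$, endowed with the commutator bracket of operators on $V^a$, is closed under brackets, and for all $n,m\in\mathbb Z$: $$[L_n,L_m]=A_{n,m}(s)\otimes L_{n+m},$$ i.e. for $f(z)=\sum_k a_k z^{ak}$ one has $[L_n,L_m]f=\sum_k a_k A_{n,m}(k)\,L_{n+m}(z^{ak})$. More generally, for all $\phi,\psi\in\mathcal H$, $$[\phi\otimes L_n,\psi\otimes L_m]=\big(\psi(s+n)\phi(s)\Gamma_n(s)-\psi(s)\phi(s+m)\Gamma_m(s)\big)\otimes L_{m+n}.$$ Moreover, if $a\notin\mathbb Z$, then $A_{n,m}\in\mathcal H$.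
   Context: Fix $a\in\mathbb R$. For $p\in\mathbb Z$ define the meromorphic functions of $s\in\mathbb C$ $$\Gamma_p(s)=\frac{\Gamma(a(s+p)+1)}{\Gamma(a(s+p-1)+1)},\qquad A_{p,q}(s)=\Gamma_p(s)-\Gamma_q(s),$$ where $\Gamma$ is Euler's gamma function. Let $\mathcal F$ be the algebra of meromorphic functions on $\mathbb C$ that are holomorphic in a neighbourhood of every point whose real part is an integer. For $p,q\in\mathbb Z$ and $\phi,\psi\in\mathcal F$ put $[\phi,\psi]_{p,q}(s)=\psi(s+p)\phi(s)\Gamma_p(s)-\phi(s+q)\psi(s)\Gamma_q(s)$ if $p\neq q$ and $[\phi,\psi]_{p,p}=0$. Let $\mathcal H$ be the smallest subalgebra of $\mathcal F$ containing the constants $\mathbb C$ and closed under all the operations $[\cdot,\cdot]_{p,q}$, $p,q\in\mathbb Z$. Let $V^a=\mathbb C[[z^{-a},z^a]]$ be the space of formal series $\sum_{k\in\mathbb Z}p_kz^{ak}$ ($z^a$ a formal symbol). The fractional derivative is the linear operator with $(\partial/\partial z)^a(z^{ak})=\frac{\Gamma(ak+1)}{\Gamma(a(k-1)+1)}z^{a(k-1)}$, and $L_n=-z^{a(n+1)}(\partial/\partial z)^a$, so that $L_n(z^{ak})=-\Gamma_0(k)z^{a(k+n)}$. For $\phi\in\mathcal H$, the operator $\phi\otimes L_n$ acts on $V^a$ by $(\phi\otimes L_n)(z^{ak})=\phi(k)L_n(z^{ak})$, extended linearly. $\mathcal W_a=\bigoplus_{n\in\mathbb Z}\mathcal H\otimes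 L_n$ (an $\mathcal H$-module, graded by $n$), with bracket the commutator of operators on $V^a$. Coefficients are understood as values of the indicated meromorphic functions, and identities as identities of meromorphic functions of $s$. *)

From HB Require Import structures.
From mathcomp Require Import all_boot all_order all_algebra.
From mathcomp Require Import complex.
From mathcomp Require Import all_classical all_reals all_analysis.

Set Implicit Arguments.
Unset Strict Implicit.
Unset Printing Implicit Defensive.

Import Order.TTheory GRing.Theory Num.Theory numFieldNormedType.Exports.
Local Open Scope ring_scope.
Local Open Scope complex_scope.

Section FractionalWitt.
Variable R : realType.
Local Notation C := R[i].

Definition cnorm (z : C) : R := Num.sqrt (complex.Re z ^+ 2 + complex.Im z ^+ 2).

Definition cdiff (f : C -> C) (z : C) : Prop :=
  exists l : C, forall e : R, 0 < e -> exists d : R, 0 < d /\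
    forall w : C, 0 < cnorm (w - z) < d -> cnorm ((f w - f z) / (w - z) - l) < e.

Definition holo_near (f : C -> C) (z0 : C) : Prop :=
  exists r : R, 0 < r /\ forall z : C, cnorm (z - z0) < r -> cdiff f z.

(* f (a total function, whose values at poles are irrelevant) represents a
   meromorphic function on C: every point z0 is at worst a pole, i.e. f is
   holomorphic on a punctured disc around z0 and (z - z0)^k f(z) is bounded
   there for some k (so the singularity is removable or a pole of order <= k). *)
Definition meromorphic (f : C -> C) : Prop :=
  forall z0 : C, exists r : R, 0 < r /\
    (forall z : C, 0 < cnorm (z - z0) < r -> cdiff f z) /\
    exists (k : nat) (M : R), forall z : C, 0 < cnorm (z - z0) < r ->
      cnorm ((z - z0) ^+ k * f z) <= M.

Definition F_alg (f : C -> C) : Prop :=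
  meromorphic f /\
  forall z : C, (exists k : int, complex.Re z = k%:~R) -> holo_near f z.

Definition cpow (x : R) (z : C) : C :=
  (expR (complex.Re z * ln x))%:C *
  (cos (complex.Im z * ln x) +i* sin (complex.Im z * ln x)).

Definition gauss_seq (z : C) (n : nat) : C :=
  (n`!)%:R * cpow n%:R z / \prod_(i < n.+1) (z + i%:R).

(* Gamma z = lim_{n -> oo} n! n^z / (z (z+1) ... (z+n)); this is Euler's
   Gamma function for z not in {0,-1,-2,...} (junk value at the poles). *)
Definition Gamma (z : C) : C :=
  limn (fun n => complex.Re (gauss_seq z n)) +i*
  limn (fun n => complex.Im (gauss_seq z n)).

Definition Gam (a : R) (p : int) (s : C) : C :=
  Gamma (a%:C * (s + p%:~R) + 1) / Gamma (a%:C * (s + p%:~R - 1) + 1).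

Definition Afun (a : R) (p q : int) (s : C) : C := Gam a p s - Gam a q s.

Definition brk (a : R) (p q : int) (phi psi : C -> C) : C -> C :=
  if p == q then (fun _ => 0)
  else fun s => psi (s + p%:~R) * phi s * Gam a p s
                - phi (s + q%:~R) * psi s * Gam a q s.

(* H: the smallest subalgebra of F containing the constants and closed under
   all the brackets [.,.]_{p,q} (intersection of all such subalgebras). *)
Definition H_alg (a : R) (phi : C -> C) : Prop :=
  forall S : (C -> C) -> Prop,
    (forall f, S f -> F_alg f) ->
    (forall c : C, S (fun _ => c)) ->
    (forall f g, S f -> S g -> S (fun s => f s + g s)) ->
    (forall f g, S f -> S g -> S (fun s => f s * g s)) ->
    (forall (p q : int) f g, S f -> S g -> S (brk a p q f g)) ->
    S phi.

(* V^a = C[[z^-a, z^a]]: f = sum_k f(k) z^{ak}, coefficients indexed by Z *)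
Definition Va := int -> C.

(* fractional derivative: (d/dz)^a z^{ak} = G(ak+1)/G(a(k-1)+1) z^{a(k-1)} *)
Definition fracD (a : R) (f : Va) : Va :=
  fun j => Gamma (a%:C * (j + 1)%:~R + 1) / Gamma (a%:C * ((j + 1) - 1)%:~R + 1)
           * f (j + 1).

(* multiplication by z^{am} *)
Definition zmul (m : int) (f : Va) : Va := fun j => f (j - m).

Definition Lop (a : R) (n : int) (f : Va) : Va :=
  fun j => - zmul (n + 1) (fracD a f) j.

(* phi (x) L_n : z^{ak} |-> phi(k) L_n(z^{ak}), extended linearly *)
Definition tens (a : R) (phi : C -> C) (n : int) (f : Va) : Va :=
  Lop a n (fun k => phi k%:~R * f k).

Definition comm (T1 T2 : Va -> Va) : Va -> Va :=
  fun f j => T1 (T2 f) j - T2 (T1 f) j.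

Definition in_W (a : R) (T : Va -> Va) : Prop :=
  exists (N : nat) (ns : 'I_N -> int) (phis : 'I_N -> C -> C),
    (forall i, H_alg a (phis i)) /\
    T = fun f j => \sum_(i < N) tens a (phis i) (ns i) f j.

End FractionalWitt.

From HB Require Import structures.
From mathcomp Require Import all_boot all_order all_algebra.
From mathcomp Require Import complex.
From mathcomp Require Import all_classical all_reals all_analysis.
From mathcomp Require Import ring zify.
Import GRing.Theory Num.Theory.
Local Open Scope ring_scope.

(* The operator phi (x) L_n sends z^{ak} to -phi(k) Gamma_0(k) z^{a(k+n)}, and
   Gamma_0(s + p) = Gamma_p(s); composing two such operators coefficientwise gives
   the bracket formula, whose coefficient D_{n,m}(phi, psi) is [phi, psi]_{n,m}
   when n <> m.  For n = m one uses
   [phi, psi]_{p,q} - [psi, phi]_{p,q} = D_{p,p} + D_{q,q}  (p <> q),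
   and solves the three equations for p, q in {n, n+1, n+2} for D_{n,n}.  So every
   bracket coefficient lies in H, which makes W_a closed under commutators, and
   A_{n,m} is the coefficient for phi = psi = 1. *)

Section FractionalWittAlgebra.
Variable R : realType.
Variable a : R.
Local Notation C := R[i].

Definition witt_coef (n m : int) (phi psi : C -> C) (s : C) : C :=
  psi (s + n%:~R) * phi s * Gam a n s - psi s * phi (s + m%:~R) * Gam a m s.

Lemma Gam_shift (p q : int) (s : C) : Gam a p (s + q%:~R) = Gam a (p + q) s.
Proof. rewrite /Gam intrD; congr (Gamma (_ * _ + 1) / Gamma (_ * _ + 1)); ring. Qed.

Lemma tensE phi n (f : Va R) j :
  tens a phi n f j = - (Gam a 0 (j - n)%:~R * (phi (j - n)%:~R * f (j - n))).
Proof.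
rewrite /tens /Lop /zmul /fracD /Gam.
have -> : j - (n + 1) + 1 = j - n by ring.
by rewrite addr0 !intrB.
Qed.

Lemma Lop_tens1 n : Lop a n = tens a (fun _ => 1) n.
Proof.
apply/funext => f; apply/funext => j; rewrite /tens.
by congr (Lop a n _ j); apply/funext => k; rewrite mul1r.
Qed.

Lemma comm_tens phi psi n m :
  comm (tens a phi n) (tens a psi m) = tens a (witt_coef n m phi psi) (m + n).
Proof.
apply/funext => f; apply/funext => j; rewrite /comm /witt_coef !tensE.
rewrite -(subrK (m + n) j); move: (j - (m + n)) => k.
have -> : k + (m + n) - n - m = k by ring.
have -> : k + (m + n) - m - n = k by ring.
have -> : k + (m + n) - (m + n) = k by ring.
have -> : k + (m + n) - n = k + m by ring.
have -> : k + (m + n) - m = k + n by ring.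
rewrite !intrD !Gam_shift !add0r; ring.
Qed.

Lemma witt_coef1 n m : witt_coef n m (fun _ => 1) (fun _ => 1) = Afun a n m.
Proof. by apply/funext => s; rewrite /witt_coef /Afun !mul1r. Qed.

Lemma brk_neq p q phi psi : p != q -> brk a p q phi psi = witt_coef p q phi psi.
Proof. by move=> /negbTE pq; apply/funext => s; rewrite /brk pq /witt_coef; ring. Qed.

Lemma brk_sub_swap p q phi psi s : p != q ->
  brk a p q phi psi s - brk a p q psi phi s = witt_coef p p phi psi s + witt_coef q q phi psi s.
Proof. by move=> pq; rewrite !brk_neq // /witt_coef; ring. Qed.

Lemma H_alg_const c : H_alg a (fun _ => c).
Proof. by move=> S _ hc _ _ _; apply: hc. Qed.

Lemma H_alg_add {f g} : H_alg a f -> H_alg a g -> H_alg a (fun s => f s + g s).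
Proof.
move=> hf hg S hF hc hD hM hB.
exact: hD (hf S hF hc hD hM hB) (hg S hF hc hD hM hB).
Qed.

Lemma H_alg_mul {f g} : H_alg a f -> H_alg a g -> H_alg a (fun s => f s * g s).
Proof.
move=> hf hg S hF hc hD hM hB.
exact: hM (hf S hF hc hD hM hB) (hg S hF hc hD hM hB).
Qed.

Lemma H_alg_brk p q {f g} : H_alg a f -> H_alg a g -> H_alg a (brk a p q f g).
Proof.
move=> hf hg S hF hc hD hM hB.
exact: hB (hf S hF hc hD hM hB) (hg S hF hc hD hM hB).
Qed.

Lemma eq_H_alg {f g} : H_alg a f -> (forall s, f s = g s) -> H_alg a g.
Proof. by move=> hf /funext <-. Qed.

Lemma H_alg_scale c {f} : H_alg a f -> H_alg a (fun s => c * f s).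
Proof. exact: H_alg_mul (H_alg_const c). Qed.

Lemma H_alg_sub {f g} : H_alg a f -> H_alg a g -> H_alg a (fun s => f s - g s).
Proof.
move=> hf /(H_alg_scale (-1)) hg.
by apply: (eq_H_alg (H_alg_add hf hg)) => s; rewrite mulN1r.
Qed.

Lemma H_alg_witt_coef phi psi n m : H_alg a phi -> H_alg a psi ->
  H_alg a (witt_coef n m phi psi).
Proof.
move=> hphi hpsi; have [<-|nm] := eqVneq n m; last first.
  by rewrite -brk_neq //; apply: H_alg_brk.
pose D p q := fun s => brk a p q phi psi s - brk a p q psi phi s.
have hD p q : H_alg a (D p q) by apply: H_alg_sub; apply: H_alg_brk.
have n1 : n != n + 1 by apply/eqP; lia.
have n2 : n != n + 2 by apply/eqP; lia.
have n12 : n + 1 != n + 2 by apply/eqP; lia.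
apply: (eq_H_alg
  (H_alg_scale 2^-1 (H_alg_sub (H_alg_add (hD n (n + 1)) (hD n (n + 2))) (hD (n + 1) (n + 2))))).
by move=> s; rewrite /D !brk_sub_swap //; field.
Qed.

Definition sum_additive (T : Va R -> Va R) :=
  forall N (G : 'I_N -> Va R) j, T (fun k => \sum_(l < N) G l k) j = \sum_(l < N) T (G l) j.

Lemma tens_sum_additive phi n : sum_additive (tens a phi n).
Proof.
move=> N G j; rewrite tensE !mulr_sumr -sumrN.
by apply: eq_bigr => l _; rewrite tensE.
Qed.

Lemma comm_sum {N1 N2} {T1 : 'I_N1 -> Va R -> Va R} {T2 : 'I_N2 -> Va R -> Va R} :
  (forall i, sum_additive (T1 i)) -> (forall k, sum_additive (T2 k)) ->
  comm (fun f j => \sum_(i < N1) T1 i f j) (fun f j => \sum_(k < N2) T2 k f j) =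
  fun f j => \sum_(i < N1) \sum_(k < N2) comm (T1 i) (T2 k) f j.
Proof.
move=> add1 add2; apply/funext => f; apply/funext => j; rewrite /comm.
under eq_bigr do rewrite add1.
under [X in _ - X]eq_bigr do rewrite add2.
rewrite [X in _ - X]exchange_big -sumrB; apply: eq_bigr => i _.
by rewrite -sumrB.
Qed.

Lemma in_W_tens phi n : H_alg a phi -> in_W a (tens a phi n).
Proof.
move=> hphi; exists 1%N, (fun _ => n), (fun _ => phi); split => //.
by apply/funext => f; apply/funext => j; rewrite big_ord1.
Qed.

Lemma in_W0 : in_W a (fun _ _ => 0).
Proof.
exists 0%N, (fun _ => 0), (fun _ _ => 0); split => [i|]; first exact: H_alg_const.
by apply/funext => f; apply/funext => j; rewrite big_ord0.
Qed.

Lemma in_W_add T1 T2 : in_W a T1 -> in_W a T2 -> in_W a (fun f j => T1 f j + T2 f j).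
Proof.
move=> [N1 [ns1 [phis1 [H1 ->]]]] [N2 [ns2 [phis2 [H2 ->]]]].
pose glue T (u : 'I_N1 -> T) (v : 'I_N2 -> T) (i : 'I_(N1 + N2)) :=
  match fintype.split i with inl k => u k | inr k => v k end.
exists (N1 + N2)%N, (glue _ ns1 ns2), (glue _ phis1 phis2); split.
  by move=> i; rewrite /glue; case: (fintype.split i).
apply/funext => f; apply/funext => j; rewrite big_split_ord /glue.
by congr (_ + _); apply: eq_bigr => i _; rewrite ?(unsplitK (inl i)) ?(unsplitK (inr i)).
Qed.

Lemma in_W_sum N (T : 'I_N -> Va R -> Va R) : (forall i, in_W a (T i)) ->
  in_W a (fun f j => \sum_(i < N) T i f j).
Proof.
elim: N T => [|N IH] T hT.
  suff -> : (fun f j => \sum_(i < 0) T i f j) = (fun _ _ => 0) by exact: in_W0.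
  by apply/funext => f; apply/funext => j; rewrite big_ord0.
have -> : (fun f j => \sum_(i < N.+1) T i f j) =
    (fun f j => \sum_(i < N) T (widen_ord (leqnSn N) i) f j + T ord_max f j).
  by apply/funext => f; apply/funext => j; rewrite big_ord_recr.
by apply: in_W_add; [apply: IH | apply: hT].
Qed.

Lemma in_W_comm T1 T2 : in_W a T1 -> in_W a T2 -> in_W a (comm T1 T2).
Proof.
move=> [N1 [ns1 [phis1 [H1 ->]]]] [N2 [ns2 [phis2 [H2 ->]]]].
rewrite (comm_sum (fun i => tens_sum_additive (phis1 i) (ns1 i))
                  (fun k => tens_sum_additive (phis2 k) (ns2 k))).
apply: in_W_sum => i; apply: in_W_sum => k.
by rewrite comm_tens; apply: in_W_tens; apply: H_alg_witt_coef.
Qed.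

End FractionalWittAlgebra.

Theorem mainTheorem1 (R : realType) (a : R) :
  (* W_a is closed under the commutator bracket *)
  (forall T1 T2 : Va R -> Va R, in_W a T1 -> in_W a T2 -> in_W a (comm T1 T2)) /\
  (* [L_n, L_m] = A_{n,m}(s) (x) L_{n+m} *)
  (forall n m : int, comm (Lop a n) (Lop a m) = tens a (Afun a n m) (n + m)) /\
  (* [phi (x) L_n, psi (x) L_m] = (psi(s+n)phi(s)G_n(s) - psi(s)phi(s+m)G_m(s)) (x) L_{m+n} *)
  (forall (phi psi : R[i] -> R[i]) (n m : int), H_alg a phi -> H_alg a psi ->
     comm (tens a phi n) (tens a psi m) =
     tens a (fun s => psi (s + n%:~R) * phi s * Gam a n s
                      - psi s * phi (s + m%:~R) * Gam a m s) (m + n)) /\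
  (~ (exists k : int, a = k%:~R) -> forall n m : int, H_alg a (Afun a n m)).
Proof.
split; first exact: in_W_comm.
split.
  by move=> n m; rewrite !Lop_tens1 comm_tens witt_coef1 addrC.
split; first by move=> phi psi n m _ _; exact: comm_tens.
move=> _ n m; rewrite -witt_coef1.
by apply: H_alg_witt_coef; apply: H_alg_const.
Qed.
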